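(* Let $\ell,s$ be positive integers with $s\le\ell$, and let $\Omega_{s,\mathbf{i}}$ ($\mathbf{i}\in\mathbb{Z}_{\ge0}^h$, $|\mathbf{i}|\le s$) be the unique elements of $\mathcal{R}$ with $\deg_{\mathcal{H}}\Omega_{s,\mathbf{i}}\le\deg_{\mathcal{H}}\Lambda_s+|\mathbf{i}|(2g-1)$ and $\Lambda_s(\mathbf{f}-\mathbf{R})^{\mathbf{i}}=G^{|\mathbf{i}|}\Omega_{s,\mathbf{i}}$. Then for all $\mathbf{j}\in\mathbb{Z}_{\ge0}^h$ with $1\le|\mathbf{j}|\le\ell$: $$\Lambda_s\mathbf{f}^{\mathbf{j}}=\sum_{\mathbf{i}\preceq\mathbf{j}}\Omega_{s,\mathbf{i}}\binom{\mathbf{j}}{\mathbf{i}}\mathbf{R}^{\mathbf{j}-\mathbf{i}}G^{|\mathbf{i}|}\quad\text{if } 1\le|\mathbf{j}|<s,$$ $$\Lambda_s\mathbf{f}^{\mathbf{j}}\equiv\sum_{\mathbf{i}\preceq\mathbf{j},\ |\mathbf{i}|<s}\Omega_{s,\mathbf{i}}\binom{\mathbf{j}}{\mathbf{i}}\mathbf{R}^{\mathbf{j}-\mathbf{i}}G^{|\mathbf{i}|}\mod G^s\quad\text{if } s\le|\mathbf{j}|\le\ell,$$ as congruences over $\mathcal{R}$.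
   Context: Let $q$ be a prime power. The Hermitian curve over $\mathbb{F}_{q^2}$ is the smooth projective plane curve with affine equation $Y^q+Y=X^{q+1}$; it has genus $g=\tfrac12 q(q-1)$, $n=q^3$ affine rational points $P_1,\dots,P_n$ and the point at infinity $P_\infty$. Let $\mathcal{R}=\bigcup_{m\ge0}\mathcal{L}(mP_\infty)=\mathbb{F}_{q^2}[X,Y]/(Y^q+Y-X^{q+1})$ with basis $\{X^iY^j: i\ge0,0\le j<q\}$; $\deg_{\mathcal{H}} f=-v_{P_\infty}(f)$ ($v_P$ the valuation at $P$), so $\deg_{\mathcal{H}}(X^iY^j)=iq+j(q+1)$; $f\ne0$ is monic if the coefficient of its basis monomial of largest $\deg_{\mathcal{H}}$ is $1$. Fix integers $h\ge1$ and $m_{\mathrm H}$ with $2(g-1)<m_{\mathrm H}<n$. Let $\mathbf{f}=(f_1,\dots,f_h)\in\mathcal{L}(m_{\mathrm H}P_\infty)^h$ and $\mathbf{r}=\mathbf{c}+\mathbf{e}\in\mathbb{F}_{q^2}^{h\times n}$ where $\mathbf{c}$ has $i$-th row $(f_i(P_1),\dots,f_i(P_n))$; $\mathcal{E}\subseteq\{1,\dots,n\}$ is the set of indices of nonzero columns of $\mathbf{e}$. $\Lambda_s$ is the unique monic element of minimal $\deg_{\mathcal{H}}$ of $\{\Lambda\in\mathcal{R}:v_{P_i}(\Lambda)\ge s\ \forall i\in\mathcal{E}\}$. $\mathbf{R}=(R_1,\dots,R_h)\in\mathcal{R}^h$ with $\deg_{\mathcal{H}}R_i<n+2g$ and $R_i(P_j)=r_{i,j}$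 for all $i,j$; $G=X^{q^2}-X$. For $\mathbf{i},\mathbf{j}\in\mathbb{Z}_{\ge0}^h$: $|\mathbf{i}|=\sum_\mu i_\mu$; $\mathbf{i}\preceq\mathbf{j}$ iff $i_\mu\le j_\mu$ for all $\mu$; $\mathbf{a}^{\mathbf{i}}=\prod_\mu a_\mu^{i_\mu}$ for $\mathbf{a}\in\mathcal{R}^h$; $\binom{\mathbf{j}}{\mathbf{i}}=\prod_\mu\binom{j_\mu}{i_\mu}$. *)

(* Hermitian curve Y^q + Y = X^(q+1) over a finite field F
   with #|F| = q^2.  Elements of the coordinate ring
   R = F[X,Y]/(Y^q+Y-X^(q+1)) are represented by bivariate polynomials
   p : {poly {poly F}} (outer variable = Y, inner variable = X), and
   equality in R is congruence modulo the Hermitian polynomial. *)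
From HB Require Import structures.
From mathcomp Require Import all_boot all_order all_algebra.
Set Implicit Arguments. Unset Strict Implicit. Unset Printing Implicit Defensive.
Import Order.TTheory GRing.Theory Num.Theory.
Local Open Scope ring_scope.

Section Hermitian.
Variables (F : finFieldType) (q : nat).

Definition bipoly := {poly {poly F}}.

Definition XX : bipoly := ('X)%:P.
Definition YY : bipoly := 'X.

Definition hermH : bipoly := YY ^+ q + YY - XX ^+ q.+1.

Definition eqR (f g : bipoly) : Prop := exists k : bipoly, f - g = k * hermH.

Definition congR (M f g : bipoly) : Prop := exists t : bipoly, eqR (f - g) (M * t).

(* canonical representative in the basis X^i Y^j, j < q *)
Definition redR (f : bipoly) : bipoly := Pdiv.Ring.rmodp f hermH.

Definition coefR (f : bipoly) (i j : nat) : F := (nth 0 (redR f) j)`_i.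

Definition wH (i j : nat) : nat := (i * q + j * q.+1)%N.

(* deg_H f = max weight of a basis monomial occurring in f
   (convention: deg_H 0 = 0; only used where harmless) *)
Definition degH (f : bipoly) : nat :=
  \max_(j < q) \max_(i < size (nth (0%R : {poly F}) (redR f) j) | coefR f i j != 0%R) wH i j.

Definition monicH (f : bipoly) : Prop :=
  exists i j : nat, [/\ (j < q)%N, coefR f i j != 0, wH i j = degH f & coefR f i j = 1].

Definition onCurve (P : F * F) : bool := P.2 ^+ q + P.2 == P.1 ^+ q.+1.
Definition hpoint := {P : F * F | onCurve P}.

Definition evalP (f : bipoly) (P : F * F) : F :=
  (map_poly (fun c : {poly F} => c.[P.1]) f).[P.2].

(* v_P(f) >= s : f lies in m_P^s O_P, where O_P is the local ring at the
   (smooth) point P = (a,b) and m_P = (X - a, Y - b) O_P *)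
Definition vge (P : F * F) (s : nat) (f : bipoly) : Prop :=
  exists w : bipoly, evalP w P != 0 /\
  exists c : nat -> bipoly,
    eqR (w * f) (\sum_(k < s.+1) c k * (XX - (P.1)%:P%:P) ^+ k * (YY - (P.2)%:P%:P) ^+ (s - k)).

Definition Gpol : bipoly := XX ^+ (q ^ 2) - XX.

End Hermitian.

Definition mabs (h : nat) (i : 'I_h -> nat) : nat := (\sum_(k < h) i k)%N.
Definition mbinom (h : nat) (j i : 'I_h -> nat) : nat := (\prod_(k < h) 'C(j k, i k))%N.
Definition mpow (R : pzRingType) (h : nat) (a : 'I_h -> R) (i : 'I_h -> nat) : R :=
  \prod_(k < h) a k ^+ i k.

From HB Require Import structures.
From mathcomp Require Import all_boot all_order all_algebra.
From mathcomp Require Import ring.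
Set Implicit Arguments.
Unset Strict Implicit.
Unset Printing Implicit Defensive.

Import Order.TTheory GRing.Theory Num.Theory.
Local Open Scope ring_scope.

(* Write f = (f - R) + R and expand multinomially:
   Lam f^j = sum_(i <= j) C(j, i) Lam (f - R)^i R^(j - i).
   When |i| <= s the defining relation of Om replaces Lam (f - R)^i by
   G^|i| Om_i.  When |i| >= s, choose psi <= i with |psi| = s: then
   Lam (f - R)^i = Lam (f - R)^psi (f - R)^(i - psi) = G^s Om_psi (f - R)^(i - psi),
   a multiple of G^s. *)

Section Congruence.
Variables (R : comNzRingType) (H : R).

(* [eqR q] and [congR q M] are [eqmod (hermH F q)] and
   [fun f g => dvdmod (hermH F q) M (f - g)], up to conversion. *)
Definition eqmod (x y : R) : Prop := exists k, x - y = k * H.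
Definition dvdmod (M x : R) : Prop := exists t, eqmod x (M * t).

Lemma eqmodD x1 y1 x2 y2 :
  eqmod x1 y1 -> eqmod x2 y2 -> eqmod (x1 + x2) (y1 + y2).
Proof. by move=> [k1 e1] [k2 e2]; exists (k1 + k2); rewrite mulrDl -e1 -e2; ring. Qed.

Lemma eqmodMr x y c : eqmod x y -> eqmod (x * c) (y * c).
Proof. by move=> [k e]; exists (k * c); rewrite -mulrBl e mulrAC. Qed.

Lemma eqmod_sum (I : Type) (r : seq I) (P : pred I) (F1 F2 : I -> R) :
  (forall i, P i -> eqmod (F1 i) (F2 i)) ->
  eqmod (\sum_(i <- r | P i) F1 i) (\sum_(i <- r | P i) F2 i).
Proof.
move=> eqF; apply: big_ind2 => //; last exact: eqmodD.
by exists 0; rewrite subr0 mul0r.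
Qed.

Lemma eqmod_dvdmodB M x y : eqmod x y -> dvdmod M (x - y).
Proof. by move=> [k e]; exists 0; exists k; rewrite mulr0 subr0. Qed.

Lemma dvdmodD M x y : dvdmod M x -> dvdmod M y -> dvdmod M (x + y).
Proof. by move=> [t1 e1] [t2 e2]; exists (t1 + t2); rewrite mulrDr; apply: eqmodD. Qed.

Lemma dvdmod_sum M (I : Type) (r : seq I) (P : pred I) (F : I -> R) :
  (forall i, P i -> dvdmod M (F i)) -> dvdmod M (\sum_(i <- r | P i) F i).
Proof.
move=> dvdF; apply: big_ind => //; last exact: dvdmodD.
by exists 0; exists 0; rewrite mulr0 subr0 mul0r.
Qed.

End Congruence.

Section MultiIndex.
Variable h : nat.
Implicit Types (j phi psi : 'I_h -> nat).

Lemma leq_index_mabs j k : (j k <= mabs j)%N.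
Proof. by rewrite /mabs (bigD1 k) //= leq_addr. Qed.

Lemma leq_mabs phi psi : (forall k, phi k <= psi k)%N -> (mabs phi <= mabs psi)%N.
Proof. by move=> le_phi_psi; apply: leq_sum => k _. Qed.

Lemma sub_mindex_mabs phi n : (n <= mabs phi)%N ->
  exists2 psi, (forall k, psi k <= phi k)%N & mabs psi = n.
Proof.
elim: n => [|n IHn] le_n_phi.
  by exists (fun _ => 0%N) => //; rewrite /mabs big1.
have [psi le_psi_phi abs_psi] := IHn (ltnW le_n_phi).
have [k lt_k | all_eq] := pickP (fun k => psi k < phi k)%N; last first.
  suff : (mabs phi <= mabs psi)%N by rewrite abs_psi leqNgt le_n_phi.
  by apply: leq_mabs => k; move/negbT: (all_eq k); rewrite -leqNgt.
exists (fun k' => if k' == k then (psi k').+1 else psi k').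
  by move=> k'; case: eqP => [->|].
move: abs_psi; rewrite /mabs (bigD1 k) //= => <-; rewrite (bigD1 k) //= eqxx addSn.
by congr (_ + _).+1; apply: eq_bigr => k' /negbTE ->.
Qed.

Variable R : comNzRingType.
Implicit Types (a b : 'I_h -> R).

Lemma mpow_split a phi psi : (forall k, psi k <= phi k)%N ->
  mpow a phi = mpow a psi * mpow a (fun k => (phi k - psi k)%N).
Proof.
by move=> le_psi_phi; rewrite /mpow -big_split; apply: eq_bigr => k _; rewrite /= -exprD subnKC.
Qed.

Lemma mpowDn l a b j : (forall k, j k <= l)%N ->
  mpow (fun k => a k + b k) j =
  \sum_(phi : {ffun 'I_h -> 'I_l.+1} | [forall k, (phi k <= j k)%N])
     mpow a (fun k => phi k) * mpow b (fun k => (j k - phi k)%N)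
       *+ mbinom j (fun k => phi k).
Proof.
move=> le_j_l; rewrite /mpow.
transitivity (\prod_k \sum_(i < l.+1) a k ^+ i * b k ^+ (j k - i) *+ 'C(j k, i)).
  apply: eq_bigr => k _; rewrite addrC exprDn.
  rewrite (big_ord_widen l.+1 (fun i => b k ^+ (j k - i) * a k ^+ i *+ 'C(j k, i)));
    last by rewrite ltnS le_j_l.
  rewrite big_mkcond; apply: eq_bigr => i _; case: ifP => le_i_j; first by rewrite mulrC.
  by rewrite bin_small ?mulr0n // ltnNge -ltnS le_i_j.
rewrite bigA_distr_bigA (bigID (fun phi : {ffun 'I_h -> 'I_l.+1} => [forall k, (phi k <= j k)%N])) /=.
rewrite [X in _ + X]big1 ?addr0 => [|phi /forallPn [k]]; last first.
  by rewrite -ltnNge => lt_j_phi; rewrite (bigD1 k) //= bin_small // mulr0n mul0r.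
by apply: eq_bigr => phi _; rewrite prodrMn big_split.
Qed.

End MultiIndex.

Section Expansion.
Variables (R : comNzRingType) (H : R) (h l s : nat).
Variables (Lam G : R) (d b : 'I_h -> R) (Om : ('I_h -> nat) -> R).
Hypothesis eqmod_Om : forall i : 'I_h -> nat, (mabs i <= s)%N ->
  eqmod H (Lam * mpow d i) (G ^+ mabs i * Om i).
Variable j : 'I_h -> nat.

Definition binomial_term (phi : 'I_h -> nat) : R :=
  Lam * (mpow d phi * mpow b (fun k => (j k - phi k)%N) *+ mbinom j phi).
Definition Om_term (phi : 'I_h -> nat) : R :=
  Om phi * (mbinom j phi)%:R * mpow b (fun k => (j k - phi k)%N) * G ^+ mabs phi.

Lemma binomial_term_eqmod (phi : 'I_h -> nat) :
  (mabs phi <= s)%N -> eqmod H (binomial_term phi) (Om_term phi).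
Proof.
move=> small_phi.
have := eqmodMr (mpow b (fun k => (j k - phi k)%N) * (mbinom j phi)%:R) (eqmod_Om small_phi).
by rewrite /binomial_term /Om_term; congr eqmod; ring.
Qed.

Lemma binomial_term_dvdmod (phi : 'I_h -> nat) :
  (s <= mabs phi)%N -> dvdmod H (G ^+ s) (binomial_term phi).
Proof.
move=> large_phi; have [psi le_psi_phi abs_psi] := sub_mindex_mabs large_phi.
set c := mpow d (fun k => (phi k - psi k)%N) * mpow b (fun k => (j k - phi k)%N)
           *+ mbinom j phi.
exists (Om psi * c); have := eqmodMr c (eqmod_Om (eq_leq abs_psi)).
rewrite abs_psi /binomial_term (mpow_split d le_psi_phi) /c.
by congr eqmod; ring.
Qed.

Hypothesis le_j_l : forall k, (j k <= l)%N.

Lemma expansion :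
  Lam * mpow (fun k => d k + b k) j =
  \sum_(phi : {ffun 'I_h -> 'I_l.+1} | [forall k, (phi k <= j k)%N])
     binomial_term (fun k => phi k).
Proof. by rewrite (mpowDn d b le_j_l) mulr_sumr. Qed.

Lemma expansion_eqmod : (mabs j < s)%N ->
  eqmod H (Lam * mpow (fun k => d k + b k) j)
    (\sum_(phi : {ffun 'I_h -> 'I_l.+1} | [forall k, (phi k <= j k)%N])
       Om_term (fun k => phi k)).
Proof.
move=> small_j; rewrite expansion; apply: eqmod_sum => phi /forallP le_phi_j.
by apply: binomial_term_eqmod; apply: leq_trans (ltnW small_j); apply: leq_mabs.
Qed.

Lemma expansion_dvdmod :
  dvdmod H (G ^+ s) (Lam * mpow (fun k => d k + b k) j -
    \sum_(phi : {ffun 'I_h -> 'I_l.+1} |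
            [forall k, (phi k <= j k)%N] && (mabs (fun k => phi k) < s)%N)
       Om_term (fun k => phi k)).
Proof.
rewrite expansion.
rewrite (bigID (fun phi : {ffun 'I_h -> 'I_l.+1} => mabs (fun k => phi k) < s)%N) /= addrAC.
apply: dvdmodD.
  apply/eqmod_dvdmodB/eqmod_sum => phi /andP [_ small_phi].
  exact/binomial_term_eqmod/ltnW.
apply: dvdmod_sum => phi /andP [_ large_phi].
by apply: binomial_term_dvdmod; rewrite leqNgt.
Qed.

End Expansion.

Theorem theorem2
  (F : finFieldType) (q : nat)
  (Hq : exists p k : nat, [/\ prime p, (0 < k)%N & q = (p ^ k)%N])
  (HF : #|F| = (q ^ 2)%N)
  (h mH : nat) (Hh : (1 <= h)%N)
  (HmH : (2 * ((q * (q - 1)) %/ 2 - 1) < mH < q ^ 3)%N)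
  (f : 'I_h -> bipoly F) (Hf : forall k, (degH q (f k) <= mH)%N)
  (r e : 'I_h -> hpoint F q -> F)
  (Hr : forall k P, r k P = evalP (f k) (val P) + e k P)
  (Rr : 'I_h -> bipoly F)
  (HRdeg : forall k, (degH q (Rr k) < q ^ 3 + 2 * ((q * (q - 1)) %/ 2))%N)
  (HRval : forall k P, evalP (Rr k) (val P) = r k P)
  (l s : nat) (Hs : (0 < s)%N) (Hsl : (s <= l)%N)
  (Lam : bipoly F)
  (HLam_in : forall P : hpoint F q, (exists k, e k P != 0) -> vge q (val P) s Lam)
  (HLam_monic : monicH q Lam)
  (HLam_min : forall L : bipoly F, ~ eqR q L 0 ->
      (forall P : hpoint F q, (exists k, e k P != 0) -> vge q (val P) s L) ->
      (degH q Lam <= degH q L)%N)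
  (Om : ('I_h -> nat) -> bipoly F)
  (HOm : forall i : 'I_h -> nat, (mabs i <= s)%N ->
      (degH q (Om i) <= degH q Lam + mabs i * (2 * ((q * (q - 1)) %/ 2) - 1))%N /\
      eqR q (Lam * mpow (fun k => f k - Rr k) i) (Gpol F q ^+ mabs i * Om i)) :
  forall j : 'I_h -> nat, (1 <= mabs j <= l)%N ->
    ((mabs j < s)%N ->
      eqR q (Lam * mpow f j)
        (\sum_(i : {ffun 'I_h -> 'I_l.+1} | [forall k, (i k <= j k)%N])
            Om (fun k => i k) * (mbinom j (fun k => i k))%:R
            * mpow Rr (fun k => (j k - i k)%N) * Gpol F q ^+ mabs (fun k => i k)))
    /\
    ((s <= mabs j)%N ->
      congR q (Gpol F q ^+ s) (Lam * mpow f j)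
        (\sum_(i : {ffun 'I_h -> 'I_l.+1} |
                 [forall k, (i k <= j k)%N] && (mabs (fun k => i k) < s)%N)
            Om (fun k => i k) * (mbinom j (fun k => i k))%:R
            * mpow Rr (fun k => (j k - i k)%N) * Gpol F q ^+ mabs (fun k => i k))).
Proof.
move=> j /andP [_ le_j_l].
have le_jk_l k : (j k <= l)%N := leq_trans (leq_index_mabs j k) le_j_l.
have eqmod_Om i : (mabs i <= s)%N ->
    eqmod (hermH F q) (Lam * mpow (fun k => f k - Rr k) i) (Gpol F q ^+ mabs i * Om i).
  by move=> small_i; have [] := HOm i small_i.
have -> : mpow f j = mpow (fun k => (f k - Rr k) + Rr k) j.
  by apply: eq_bigr => k _; rewrite subrK.
split=> [small_j | _].
  exact: (expansion_eqmod Rr eqmod_Om le_jk_l small_j).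
exact: (expansion_dvdmod Rr eqmod_Om le_jk_l).
Qed.
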